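(* Let $A$ be a real $2\times 2$ matrix and $B$ a real $1\times 2$ matrix, and let $\mathrm{NT}=\{\vec{x}\in\mathbb{R}^2 : BA^k\vec{x}>0 \text{ for all integers } k\ge 0\}$. Suppose $A$ has a positive eigenvalue and has an eigenvector $\vec{\alpha}$ with $B\vec{\alpha}=0$. If $\vec{\xi}\in\mathbb{R}^2$ satisfies $B\vec{\xi}>0$ and $BA\vec{\xi}>0$, then $\mathrm{NT}=\{\vec{x}\in\mathbb{R}^2: B\vec{x}>0\}$.
   Context: $\mathrm{NT}$ is the non-termination set of the loop ''while $(B\vec{x}>0)$ $\{\vec{x}:=A\vec{x}\}$''. *)

From HB Require Import structures.
From mathcomp Require Import all_boot all_order all_algebra.
Set Implicit Arguments. Unset Strict Implicit. Unset Printing Implicit Defensive.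
Import Order.TTheory GRing.Theory Num.Theory.
Local Open Scope ring_scope.

Definition appB (R : realFieldType) (B : 'M[R]_(1,2)) (x : 'cV[R]_2) : R :=
  (B *m x) 0 0.

Definition is_eigenvalue (R : realFieldType) (A : 'M[R]_2) (lam : R) : Prop :=
  exists v : 'cV[R]_2, v != 0 /\ A *m v = lam *: v.

Definition is_eigenvector (R : realFieldType) (A : 'M[R]_2) (v : 'cV[R]_2) : Prop :=
  v != 0 /\ exists mu : R, A *m v = mu *: v.

(* non-termination set of  while (Bx > 0) { x := A x } *)
Definition NT (R : realFieldType) (A : 'M[R]_2) (B : 'M[R]_(1,2)) (x : 'cV[R]_2) : Prop :=
  forall k : nat, 0 < appB B (A ^+ k *m x).

From HB Require Import structures.
From mathcomp Require Import all_boot all_order all_algebra.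
Set Implicit Arguments. Unset Strict Implicit. Unset Printing Implicit Defensive.
Import Order.TTheory GRing.Theory Num.Theory.
Local Open Scope ring_scope.

(* Let [alpha] be an eigenvector of [A] with [B alpha = 0], [A alpha = mu alpha].
   Then the row vector [B A] also annihilates [alpha], since
   [B A alpha = mu (B alpha) = 0].  In the plane two linear forms sharing a
   nonzero zero [alpha] are proportional (the matrix with rows [B] and [B A]
   is singular, so its rank is at most [1 = rank B]), hence [B A = c B].
   Iterating, [B A^k = c^k B], so [B A^k x = c^k (B x)] for every [x].  The
   vector [xi] with [B xi > 0] and [B A xi = c (B xi) > 0] forces [c > 0], and
   then [B A^k x > 0] for all [k] exactly when [B x > 0]. *)

Lemma appB_eq0 (R : realFieldType) (B : 'M[R]_(1,2)) (x : 'cV[R]_2) :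
  (appB B x = 0) <-> (B *m x = 0).
Proof.
rewrite /appB; split=> [Bx0 | ->]; last by rewrite mxE.
by rewrite [B *m x]mx11_scalar Bx0 -scalemx1 scale0r.
Qed.

Lemma planar_forms_proportional (F : fieldType) (b d : 'rV[F]_2)
    (a : 'cV[F]_2) :
  a != 0 -> b != 0 -> b *m a = 0 -> d *m a = 0 -> exists c : F, d = c *: b.
Proof.
move=> a_nz b_nz ba0 da0.
set M := col_mx b d.
have M_singular : M \notin unitmx.
  apply: contra a_nz => M_unit.
  by rewrite -(mulKmx M_unit a) /M mul_col_mx ba0 da0 col_mx0 mulmx0.
have rankM : (\rank M <= \rank b)%N.
  rewrite rank_rV b_nz -ltnS ltn_neqAle rank_leq_row andbT.
  by rewrite -row_free_unit in M_singular.
have M_sub_b : (M <= b)%MS.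
  have b_sub_M : (b <= M)%MS by rewrite -addsmxE addsmxSl.
  by rewrite -(mxrank_leqif_sup b_sub_M) eqn_leq rankM mxrankS.
have /submxP[D ->] : (d <= b)%MS.
  by move: M_sub_b; rewrite -addsmxE addsmx_sub => /andP[].
by exists (D 0 0); rewrite {1}[D]mx11_scalar mul_scalar_mx.
Qed.

Lemma row_eigen_powers (F : fieldType) (n : nat) (A : 'M[F]_n.+1)
    (B : 'rV[F]_n.+1) (c : F) :
  B *m A = c *: B -> forall k : nat, B *m A ^+ k = c ^+ k *: B.
Proof.
move=> BA; elim=> [|k IH]; first by rewrite expr0 mulmx1 scale1r.
by rewrite exprSr mulmxA IH -scalemxAl BA scalerA -exprSr.
Qed.

Theorem lemma4 (R : realFieldType) (A : 'M[R]_2) (B : 'M[R]_(1,2)) :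
  (exists lam : R, 0 < lam /\ is_eigenvalue A lam) ->
  (exists alpha : 'cV[R]_2, is_eigenvector A alpha /\ appB B alpha = 0) ->
  forall xi : 'cV[R]_2, 0 < appB B xi -> 0 < appB B (A *m xi) ->
  forall x : 'cV[R]_2, NT A B x <-> 0 < appB B x.
Proof.
move=> _ [a [[a_nz [mu Aa]] /appB_eq0 Ba]] xi Bxi BAxi.
have B_nz : B != 0 by apply: contraTneq Bxi => ->; rewrite /appB mul0mx mxE ltxx.
have BAa : (B *m A) *m a = 0 by rewrite -mulmxA Aa -scalemxAr Ba scaler0.
have [c BA] := planar_forms_proportional a_nz B_nz Ba BAa.
have orbit x k : appB B (A ^+ k *m x) = c ^+ k * appB B x.
  by rewrite /appB mulmxA (row_eigen_powers BA) -scalemxAl mxE.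
have c_pos : 0 < c by move: BAxi; rewrite -(expr1 A) orbit expr1 pmulr_lgt0.
move=> x; split=> [/(_ 0%N) | Bx k]; first by rewrite orbit expr0 mul1r.
by rewrite orbit mulr_gt0 ?exprn_gt0.
Qed.
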